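(* Let $\pi$ and $\sigma$ be Knuth equivalent permutations of $[N]$ and let $I$ be a Dyck pattern interval of $\pi$. Then $I$ is also a Dyck pattern interval of $\sigma$. Furthermore, if $\pi\xrightarrow{I}\pi'$ and $\sigma\xrightarrow{I}\sigma'$ are the corresponding edges labeled $I$ in the crystal skeletons, then $\pi'$ and $\sigma'$ are Knuth equivalent.
   Context: Two words are Knuth equivalent if one can be obtained from the other by a sequence of the elementary relations $acb\equiv cab$ for $a\le b<c$ and $bac\equiv bca$ for $a<b\le c$ applied to adjacent letters. For a permutation $\pi$ of $[N]$ and an interval $I=[i,i+2m]\subseteq[N]$ with $m\ge1$, let $\pi|_I$ be the subword of letters in $I$; $I$ is a Dyck pattern interval of $\pi$ if the RSK insertion tableau $P(\pi|_I)$ has bottom row $i,\dots,i+m$ and top row $i+m+1,\dots,i+2m$ (French notation). The edge labeled $I$ out of $\pi$ goes to $\pi'=\mathsf{std}(f_i(w))$, where $w$ is obtained from $\pi$ by replacing the letters $i,\dots,i+m$ by $i$ and $i+m+1,\dots,i+2m$ by $i+1$; here $f_i$ is the crystal operator on words (in the subword of letters $i,i+1$, bracket each $i+1$ with an unbracketed $i$ to its right, parenthesis-style; $f_i$ changes the rightmost unbracketed $i$ into $i+1$), and $\mathsf{std}$ replaces the $a_j$ occurrences of each letter $j$, left to right, by $a_1+\dots+a_{j-1}+1,\dots,a_1+\dots+a_j$. *)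

From mathcomp Require Import all_boot.
From Stdlib Require Import Relations.
Set Implicit Arguments. Unset Strict Implicit. Unset Printing Implicit Defensive.

Definition knuth_step (u v : seq nat) : Prop :=
  exists (x y : seq nat) (a b c : nat),
    (a <= b < c /\ u = x ++ [:: a; c; b] ++ y /\ v = x ++ [:: c; a; b] ++ y) \/
    (a < b <= c /\ u = x ++ [:: b; a; c] ++ y /\ v = x ++ [:: b; c; a] ++ y).

Definition knuth_equiv : seq nat -> seq nat -> Prop :=
  clos_refl_sym_trans (seq nat) knuth_step.

Definition is_perm (N : nat) (w : seq nat) : bool := perm_eq w (iota 1 N).

Fixpoint row_bump (r : seq nat) (x : nat) : option nat * seq nat :=
  match r with
  | [::] => (None, [:: x])
  | y :: r' => if x < y then (Some y, x :: r')
               else let: (b, r'') := row_bump r' x in (b, y :: r'')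
  end.

Fixpoint tab_insert (t : seq (seq nat)) (x : nat) : seq (seq nat) :=
  match t with
  | [::] => [:: [:: x]]
  | r :: t' => let: (b, r') := row_bump r x in
               match b with
               | None => r' :: t'
               | Some y => r' :: tab_insert t' y
               end
  end.

(* insertion tableau P(w), rows listed from the bottom row up *)
Definition RSK_P (w : seq nat) : seq (seq nat) := foldl tab_insert [::] w.

Definition in_interval (i m x : nat) : bool := (i <= x) && (x <= i + 2 * m).

Definition restrict (pi : seq nat) (i m : nat) : seq nat :=
  filter (in_interval i m) pi.

Definition dyck_interval (N : nat) (pi : seq nat) (i m : nat) : Prop :=
  [/\ 0 < m, 1 <= i, i + 2 * m <= N &
      RSK_P (restrict pi i m) = [:: iota i m.+1; iota (i + m).+1 m]].

(* scan marking the unbracketed letters i (each i+1 is bracketed with an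
   unbracketed i to its right, parenthesis-style) *)
Fixpoint unbr_scan (i : nat) (w : seq nat) (open : nat) : seq bool :=
  match w with
  | [::] => [::]
  | x :: w' =>
      if x == i.+1 then false :: unbr_scan i w' open.+1
      else if x == i then
        match open with
        | n.+1 => false :: unbr_scan i w' n
        | 0 => true :: unbr_scan i w' 0
        end
      else false :: unbr_scan i w' open
  end.

(* f_i w: change the rightmost unbracketed i into i+1; None if there is none *)
Definition crystal_f (i : nat) (w : seq nat) : option (seq nat) :=
  let s := unbr_scan i w 0 in
  if has id s then Some (set_nth 0 w (size s - (find id (rev s)).+1) i.+1)
  else None.

(* the k-th occurrence (from the left) of letter x becomes
   #(letters < x) + k *)
Definition std (w : seq nat) : seq nat :=
  [seq count (fun y => y < nth 0 w p) w
       + count (pred1 (nth 0 w p)) (take p w) + 1 | p <- iota 0 (size w)].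

Definition collapse (i m : nat) (x : nat) : nat :=
  if (i <= x) && (x <= i + m) then i
  else if (i + m < x) && (x <= i + 2 * m) then i.+1
  else x.

Definition skeleton_edge (N : nat) (pi : seq nat) (i m : nat) (pi' : seq nat)
  : Prop :=
  dyck_interval N pi i m /\
  exists w', crystal_f i (map (collapse i m) pi) = Some w' /\ pi' = std w'.

From mathcomp Require Import all_boot zify.
From Stdlib Require Import Relations.
Set Implicit Arguments. Unset Strict Implicit. Unset Printing Implicit Defensive.

(* For a permutation, [i, i+2m] is a Dyck pattern interval exactly when the low letters
   [i..i+m] occur in increasing order, so do the high letters [i+m+1..i+2m], and, once
   low letters are collapsed to [i] and high ones to [i+1], every [i+1] is bracketed: row
   inserting such a word leaves the low letters and the unbracketed high letters in the
   bottom row and sends the bracketed high letters to the top row, while an inversion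
   inside one half would force a low letter up or a high letter down.  These conditions
   are invariant under Knuth moves.  Under the first two, collapsing maps Knuth moves to
   Knuth moves; [f_i] commutes with Knuth moves because the bracketing seen by a
   three-letter window depends only on the number of brackets open before it; and
   standardization maps Knuth moves to Knuth moves since it preserves the relative
   order of letters, ties broken from left to right. *)

(** * Row insertion *)

Notation row t r := (nth [::] t r).

Lemma row_bumpP r x :
  (all (leq^~ x) r /\ row_bump r x = (None, rcons r x)) \/
  exists p u q, [/\ r = p ++ u :: q, all (leq^~ x) p, x < u &
                    row_bump r x = (Some u, p ++ x :: q)].
Proof.
elim: r => [|y r IH] /=; first by left.
case: ifP => xy; first by right; exists [::], y, r.
have yx : y <= x by rewrite leqNgt xy.
case: IH => [[rx ->]|[p [u [q [-> px xu ->]]]]]; first by left; rewrite yx.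
by right; exists (y :: p), u, q; rewrite /= yx.
Qed.

Lemma row_bump_append r x : all (leq^~ x) r -> row_bump r x = (None, rcons r x).
Proof. by elim: r => //= y r IH /andP[yx /IH ->]; rewrite ltnNge yx. Qed.

Lemma row_bump_replace p u q x : all (leq^~ x) p -> x < u ->
  row_bump (p ++ u :: q) x = (Some u, p ++ x :: q).
Proof.
move=> + xu; elim: p => /= [|y p IH]; first by rewrite xu.
by case/andP=> yx /IH ->; rewrite ltnNge yx.
Qed.

Lemma row_bump_keeps r x : x \in (row_bump r x).2 /\
  forall e, e \in r -> e \in (row_bump r x).2 \/ (row_bump r x).1 = Some e.
Proof.
case: (row_bumpP r x) => [[_ ->]|[p [u [q [-> _ _ ->]]]]] /=.
  by split=> [|e er]; [rewrite mem_rcons mem_head | left; rewrite mem_rcons inE er orbT].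
split=> [|e]; first by rewrite mem_cat mem_head orbT.
rewrite !mem_cat !inE => /orP[ep|/orP[/eqP ->|eq]]; last 2 first.
- by right.
- by left; rewrite eq !orbT.
- by left; rewrite ep.
Qed.

Lemma row_bump_bumps r x e : e \in r -> x < e -> exists z, (row_bump r x).1 = Some z.
Proof.
case: (row_bumpP r x) => [[/allP rx _] /rx ex xe|[p [u [q [_ _ _ ->]]]]]; last by exists u.
by move: ex; rewrite leqNgt xe.
Qed.

Lemma row_bump_bumped r x z : (row_bump r x).1 = Some z ->
  x < z /\ (sorted leq r -> forall e, e \in r -> x < e -> z <= e).
Proof.
case: (row_bumpP r x) => [[_ ->] //|[p [u [q [-> /allP px xu ->]]]]] [<-].
split=> // srt e; rewrite mem_cat inE => /orP[/px ex xe|/orP[/eqP-> //|eq _]].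
  by move: ex; rewrite leqNgt xe.
by move: srt; rewrite sorted_cat_cons => /andP[_ /(order_path_min leq_trans)/allP->].
Qed.

Lemma sorted_row_bump r x : sorted leq r -> sorted leq (row_bump r x).2.
Proof.
case: (row_bumpP r x) => [[rx ->]|[p [u [q [-> px xu ->]]]]] /=.
  by rewrite -cats1 !(sorted_pairwise leq_trans) pairwise_cat allrel1r rx => ->.
rewrite !(sorted_pairwise leq_trans) !pairwise_cat /= => /and3P[pu -> /andP[uq ->]].
rewrite !andbT allrel_consr px; apply/andP; split; first by move: pu; rewrite allrel_consr => /andP[].
by apply/allP=> e /(allP uq); apply: leq_trans (ltnW xu).
Qed.

Lemma tab_insert_cons r t x : tab_insert (r :: t) x =
  (row_bump r x).2 :: (if (row_bump r x).1 is Some y then tab_insert t y else t).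
Proof. by rewrite /=; case: (row_bump r x) => [[y|] r']. Qed.

Lemma mem_tab_insert_row0 t x : x \in row (tab_insert t x) 0.
Proof.
case: t => [|r t]; first by rewrite /= inE.
by rewrite tab_insert_cons /=; case: (row_bump_keeps r x).
Qed.

Lemma tab_insert_rises t x r e : e \in row t r ->
  exists2 r', r <= r' & e \in row (tab_insert t x) r'.
Proof.
elim: t x r => [|r0 t IH] x r; first by rewrite nth_nil.
rewrite tab_insert_cons; case: r => [|r] /=.
  have [_ keep] := row_bump_keeps r0 x; case/keep => [er|->]; first by exists 0.
  by exists 1 => //=; apply: mem_tab_insert_row0.
case: (row_bump r0 x).1 => [y|] er; last by exists r.+1.
by have [r' rr' er'] := IH y r er; exists r'.+1.
Qed.

Lemma sorted_tab_insert t x : all (sorted leq) t -> all (sorted leq) (tab_insert t x).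
Proof.
elim: t x => [|r0 t IH] x //; rewrite tab_insert_cons /= => /andP[s0 st].
by rewrite sorted_row_bump //=; case: (row_bump r0 x).1 => [y|] //; apply: IH.
Qed.

Lemma tab_insert_bumps_above t j q y : y \in row t q -> j < y ->
  exists z r, [/\ 0 < r, j < z, z \in row (tab_insert t j) r &
                  (sorted leq (row t 0) -> z <= y)].
Proof.
case: t => [|r0 t]; first by rewrite nth_nil.
rewrite tab_insert_cons; case: q => [|q] /= yq jy.
  have [z Ez] := row_bump_bumps yq jy.
  have [jz zmin] := row_bump_bumped Ez.
  exists z, 1; split => //=; last by move=> s; apply: zmin.
  by rewrite Ez; apply: mem_tab_insert_row0.
case: (row_bump r0 j).1 => [y'|]; last by exists y, q.+1.
by have [r' qr' yr'] := tab_insert_rises y' yq; exists y, r'.+1.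
Qed.

Definition below_larger j t := exists r1 r2 y,
  [/\ r1 < r2, j \in row t r1, y \in row t r2 & j < y].

Lemma tab_insert_below_larger t x j : below_larger j t -> below_larger j (tab_insert t x).
Proof.
elim: t x => [|r0 t IH] x; first by case=> r1 [r2 [y [_]]]; rewrite nth_nil.
rewrite tab_insert_cons.
case=> [[|r1] [[|r2] [y [// lt12 jr yr jy]]]]; rewrite /= in jr yr.
  have [_ keep] := row_bump_keeps r0 x; case/keep: jr => [jr|->].
    case: (row_bump r0 x).1 => [z|]; last by exists 0, r2.+1, y.
    by have [r' _ yr'] := tab_insert_rises z yr; exists 0, r'.+1, y.
  have [z [r [r0p jz zr _]]] := tab_insert_bumps_above yr jy.
  by exists 1, r.+1, z; split => //=; apply: mem_tab_insert_row0.
case: (row_bump r0 x).1 => [z|]; last by exists r1.+1, r2.+1, y.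
have [|r1' [r2' [y' [? ? ? ?]]]] := IH z; first by exists r1, r2, y.
by exists r1'.+1, r2'.+1, y'.
Qed.

Lemma RSK_P_cat u v : RSK_P (u ++ v) = foldl tab_insert (RSK_P u) v.
Proof. exact: foldl_cat. Qed.

Lemma foldl_tab_insert_rises t w r e : e \in row t r ->
  exists2 r', r <= r' & e \in row (foldl tab_insert t w) r'.
Proof.
elim: w t r => [|x w IH] t r et /=; first by exists r.
have [r' rr' et'] := tab_insert_rises x et; have [r'' r'r'' et''] := IH _ _ et'.
by exists r'' => //; apply: leq_trans r'r''.
Qed.

Lemma foldl_tab_insert_below_larger t w j :
  below_larger j t -> below_larger j (foldl tab_insert t w).
Proof. by elim: w t => //= x w IH t jt; apply/IH/tab_insert_below_larger. Qed.

Lemma mem_RSK_P u e : e \in u -> exists r, e \in row (RSK_P u) r.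
Proof.
elim/last_ind: u => // u x IH.
rewrite mem_rcons inE -cats1 RSK_P_cat /= => /orP[/eqP->|/IH [r eu]].
  by exists 0; apply: mem_tab_insert_row0.
by have [r' _ eu'] := tab_insert_rises x eu; exists r'.
Qed.

Lemma sorted_RSK_P u : all (sorted leq) (RSK_P u).
Proof.
rewrite /RSK_P; elim/last_ind: u => //= u x IH.
by rewrite foldl_rcons; apply: sorted_tab_insert.
Qed.

Lemma two_row_inversion u j v k R0 R1 : RSK_P (u ++ j :: v) = [:: R0; R1] ->
  k \in u -> j < k -> j \in R0 /\ exists2 z, z <= k & z \in R1.
Proof.
move=> EP ku jk.
have [q kq] := mem_RSK_P ku.
have [z [r [r0 jz zr zk]]] := tab_insert_bumps_above kq jk.
have {}zk : z <= k by apply: zk; have := sorted_RSK_P u; case: (RSK_P u) => //= ? ? /andP[].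
have {}EP : foldl tab_insert (tab_insert (RSK_P u) j) v = [:: R0; R1] by rewrite -EP RSK_P_cat.
split.
  have : below_larger j (tab_insert (RSK_P u) j).
    by exists 0, r, z; split => //; apply: mem_tab_insert_row0.
  move/(foldl_tab_insert_below_larger v); rewrite EP => -[r1 [r2 [y [lt12 jr yr _]]]].
  case: r2 lt12 yr => [|[|r2]] //=; last by rewrite nth_nil.
  by case: r1 jr.
have [r' rr' zr'] := foldl_tab_insert_rises v zr; rewrite EP in zr'.
exists z => //; case: r' rr' zr' => [|[|r']] //=; first by rewrite leqNgt r0.
by rewrite nth_nil.
Qed.

Definition two_rows (R0 R1 : seq nat) := [seq r <- [:: R0; R1] | r != [::]].

Lemma rcons_nil_neq (s : seq nat) x : rcons s x != [::].
Proof. by case: s. Qed.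

Lemma cat_cons_nil_neq (p q : seq nat) u : p ++ u :: q != [::].
Proof. by case: p. Qed.

Lemma two_rowsE R0 R1 : R0 != [::] -> two_rows R0 R1 = R0 :: two_rows R1 [::].
Proof. by rewrite /two_rows /= => ->. Qed.

Lemma two_rows_insert_high R0 R1 x : all (leq^~ x) R0 -> (R1 != [::] -> R0 != [::]) ->
  tab_insert (two_rows R0 R1) x = two_rows (rcons R0 x) R1.
Proof.
case: R0 => [_|r R0 R0x _]; first by case: R1 => // ? ? /(_ isT).
rewrite two_rowsE // (two_rowsE _ (rcons_nil_neq _ _)) tab_insert_cons.
by rewrite row_bump_append.
Qed.

Lemma two_rows_insert_low p u q R1 x : all (leq^~ x) p -> x < u -> all (leq^~ u) R1 ->
  tab_insert (two_rows (p ++ u :: q) R1) x = two_rows (p ++ x :: q) (rcons R1 u).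
Proof.
move=> px xu R1u; rewrite !(two_rowsE _ (cat_cons_nil_neq _ _ _)) tab_insert_cons.
rewrite row_bump_replace //=; case: R1 R1u => [//|r R1 R1u].
rewrite (two_rowsE _ (rcons_nil_neq _ _)) two_rowsE // tab_insert_cons.
by rewrite row_bump_append.
Qed.

(** * Bracketing and the crystal operator *)

Definition open_step i o x := if x == i.+1 then o.+1 else if x == i then o.-1 else o.
Definition open_after i w o := foldl (open_step i) o w.

Lemma unbr_scan_cat i x z o :
  unbr_scan i (x ++ z) o = unbr_scan i x o ++ unbr_scan i z (open_after i x o).
Proof.
elim: x o => //= y x IH o; rewrite /open_step.
case: ifP => _; first by rewrite IH.
by case: ifP => _; [case: o => [|o] | ]; rewrite IH.
Qed.

Lemma size_unbr_scan i w o : size (unbr_scan i w o) = size w.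
Proof.
elim: w o => //= y w IH o.
by case: ifP => _; [|case: ifP => _; [case: o => [|o]|]]; rewrite /= IH.
Qed.

Definition last_true (s : seq bool) := size s - (find id (rev s)).+1.

Lemma last_true_cat s1 s2 :
  last_true (s1 ++ s2) = if has id s2 then size s1 + last_true s2 else last_true s1.
Proof.
rewrite /last_true rev_cat find_cat has_rev size_cat size_rev.
case: ifP => h; last by lia.
by move: h; rewrite -has_rev has_find size_rev; lia.
Qed.

Lemma last_true_lt s : has id s -> last_true s < size s.
Proof. by rewrite /last_true -has_rev has_find size_rev; lia. Qed.

Definition local_f i t o := set_nth 0 t (last_true (unbr_scan i t o)) i.+1.

Lemma set_nth_catl (s1 s2 : seq nat) n y : n < size s1 ->
  set_nth 0 (s1 ++ s2) n y = set_nth 0 s1 n y ++ s2.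
Proof. by elim: s1 n => //= x s1 IH [|n] //= h; rewrite IH. Qed.

Lemma set_nth_catr (s1 s2 : seq nat) n y :
  set_nth 0 (s1 ++ s2) (size s1 + n) y = s1 ++ set_nth 0 s2 n y.
Proof. by elim: s1 => //= x s1 IH; rewrite IH. Qed.

Lemma crystal_f_cat3 i x t y (ot := open_after i x 0) (oy := open_after i t ot) :
  crystal_f i (x ++ t ++ y) =
  if has id (unbr_scan i y oy) then Some (x ++ t ++ local_f i y oy)
  else if has id (unbr_scan i t ot) then Some (x ++ local_f i t ot ++ y)
  else omap (fun x' => x' ++ t ++ y) (crystal_f i x).
Proof.
rewrite /crystal_f -/(last_true (unbr_scan i x 0)) -/(last_true (unbr_scan i (x ++ t ++ y) 0)).
rewrite !unbr_scan_cat -/ot -/oy !last_true_cat !has_cat !size_unbr_scan /local_f.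
case hy: (has id (unbr_scan i y oy)); rewrite ?orbT /=.
  by rewrite addnA -size_cat catA set_nth_catr -catA.
case ht: (has id (unbr_scan i t ot)); rewrite ?orbT ?orbF /=.
  by rewrite set_nth_catr set_nth_catl // -(size_unbr_scan i t ot) last_true_lt.
case: ifP => //= hx.
by rewrite set_nth_catl // -(size_unbr_scan i x 0) last_true_lt.
Qed.

(** * Knuth moves *)

Definition knuth_triple (t t' : seq nat) := exists a b c,
  (a <= b < c /\ t = [:: a; c; b] /\ t' = [:: c; a; b]) \/
  (a < b <= c /\ t = [:: b; a; c] /\ t' = [:: b; c; a]).

Lemma knuth_stepE u v : knuth_step u v <->
  exists x y t t', [/\ knuth_triple t t', u = x ++ t ++ y & v = x ++ t' ++ y].
Proof.
split.
  case=> x [y [a [b [c [[h [-> ->]]|[h [-> ->]]]]]]].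
    by exists x, y, [:: a; c; b], [:: c; a; b]; split => //; exists a, b, c; left.
  by exists x, y, [:: b; a; c], [:: b; c; a]; split => //; exists a, b, c; right.
case=> x [y [t [t' [[a [b [c [[h [-> ->]]|[h [-> ->]]]]]] -> ->]]]].
  by exists x, y, a, b, c; left.
by exists x, y, a, b, c; right.
Qed.

Lemma knuth_equiv_cat x y t t' :
  knuth_equiv t t' -> knuth_equiv (x ++ t ++ y) (x ++ t' ++ y).
Proof.
elim=> {t t'} [t t' st|t|t t' _ IH|t s t' _ IH1 _ IH2].
- apply: rst_step; case/knuth_stepE: st => x' [y' [s [s' [ss' -> ->]]]].
  by apply/knuth_stepE; exists (x ++ x'), (y' ++ y), s, s'; rewrite !catA.
- exact: rst_refl.
- exact: rst_sym.
- exact: rst_trans IH2.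
Qed.

Lemma knuth_equiv_invariant (T : Type) (g : seq nat -> T) :
  (forall u v, knuth_step u v -> g u = g v) ->
  forall u v, knuth_equiv u v -> g u = g v.
Proof.
by move=> gstep u v; elim=> [x y /gstep|x|x y _ ->|x y z _ -> _ ->].
Qed.

Lemma knuth_equiv_map (P : pred (seq nat)) (f : seq nat -> seq nat) :
  (forall u v, knuth_step u v -> P u = P v) ->
  (forall u v, knuth_step u v -> P u -> knuth_step (f u) (f v)) ->
  forall u v, knuth_equiv u v -> P u -> knuth_equiv (f u) (f v).
Proof.
move=> Pstep fstep u v; elim=> {u v} [u v /fstep fuv /fuv|u _|u v uv IH Pv|u w v uw IH1 _ IH2 Pu].
- exact: rst_step.
- exact: rst_refl.
- by apply/rst_sym/IH; rewrite (knuth_equiv_invariant Pstep uv).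
- apply: rst_trans (IH1 Pu) (IH2 _).
  by rewrite -(knuth_equiv_invariant Pstep uw).
Qed.

Lemma knuth_triple_equiv t t' : knuth_triple t t' -> knuth_equiv t t'.
Proof. by move=> tt'; apply/rst_step/knuth_stepE; exists [::], [::], t, t'; rewrite !cats0. Qed.

Definition knuth_tripleb (t t' : seq nat) := match t, t' with
  | [:: a1; a2; a3], [:: b1; b2; b3] =>
     ((a1 <= a3 < a2) && (b1 == a2) && (b2 == a1) && (b3 == a3)) ||
     ((a2 < a1 <= a3) && (b1 == a1) && (b2 == a3) && (b3 == a2))
  | _, _ => false end.

Lemma knuth_equiv_tripleb t t' :
  [|| t == t', knuth_tripleb t t' | knuth_tripleb t' t] -> knuth_equiv t t'.
Proof.
have tripleb_equiv s s' : knuth_tripleb s s' -> knuth_equiv s s'.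
  case: s => [|a1 [|a2 [|a3 [|]]]] //; case: s' => [|b1 [|b2 [|b3 [|]]]] //=.
  case/orP=> /andP[/andP[/andP[h /eqP->] /eqP->] /eqP->]; apply: knuth_triple_equiv.
    by exists a1, a3, a2; left.
  by exists a2, a1, a3; right.
case/or3P=> [/eqP->|/tripleb_equiv //|/tripleb_equiv]; first exact: rst_refl.
exact: rst_sym.
Qed.

Lemma succn_neq i : (i.+1 == i) = false. Proof. by elim: i. Qed.
Lemma neq_succn i : (i == i.+1) = false. Proof. by elim: i. Qed.

Ltac case_letter x i := let H1 := fresh "H" in let H2 := fresh "H" in
  have [E1|H1] := eqVneq x i; [subst x|have [E2|H2] := eqVneq x i.+1; [subst x|]].

Ltac rewrite_neqs := repeat match goal with
  H : is_true (?x != ?y) |- _ =>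
    try rewrite (negbTE H); try rewrite eq_sym (negbTE H);
    let H' := fresh "N" in (have H' : x <> y by apply/eqP); clear H
  end.

(* The brackets of a three-letter window only see whether each letter is [i], [i.+1] or
   neither, and the number [o] of open brackets only up to [3]. *)
Ltac case_window i a b c o := case_letter a i; case_letter b i; case_letter c i;
  destruct o as [|[|[|o]]];
  rewrite /= ?eqxx ?succn_neq ?neq_succn; rewrite_neqs;
  rewrite /= ?eqxx ?succn_neq ?neq_succn //=; try lia.

Lemma knuth_triple_brackets i t t' o : knuth_triple t t' ->
  [/\ open_after i t o = open_after i t' o,
      has id (unbr_scan i t o) = has id (unbr_scan i t' o) &
      has id (unbr_scan i t o) -> knuth_equiv (local_f i t o) (local_f i t' o)].
Proof.
case=> a [b [c [[h [-> ->]]|[h [-> ->]]]]]; split.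
- rewrite /open_after /= /open_step; case_window i a b c o.
- case_window i a b c o.
- move=> hh; apply: knuth_equiv_tripleb; move: hh.
  rewrite /local_f /last_true; case_window i a b c o.
- rewrite /open_after /= /open_step; case_window i a b c o.
- case_window i a b c o.
- move=> hh; apply: knuth_equiv_tripleb; move: hh.
  rewrite /local_f /last_true; case_window i a b c o.
Qed.

Lemma open_after_knuth_step i u v o : knuth_step u v -> open_after i u o = open_after i v o.
Proof.
case/knuth_stepE => x [y [t [t' [tt' -> ->]]]].
have [Eo _ _] := knuth_triple_brackets i (open_after i x o) tt'.
by rewrite /open_after !foldl_cat -!/(open_after _ _ _) Eo.
Qed.

Lemma has_unbr_knuth_step i u v : knuth_step u v ->
  has id (unbr_scan i u 0) = has id (unbr_scan i v 0).
Proof.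
case/knuth_stepE => x [y [t [t' [tt' -> ->]]]].
have [Eo Eh _] := knuth_triple_brackets i (open_after i x 0) tt'.
by rewrite !unbr_scan_cat !has_cat Eo Eh.
Qed.

Lemma crystal_f_knuth_step i u v a b : knuth_step u v ->
  crystal_f i u = Some a -> crystal_f i v = Some b -> knuth_equiv a b.
Proof.
case/knuth_stepE => x [y [t [t' [tt' -> ->]]]].
have [Eo Eh Ef] := knuth_triple_brackets i (open_after i x 0) tt'.
have Et := knuth_triple_equiv tt'.
rewrite !crystal_f_cat3 -Eo -Eh.
case: ifP => [_ [<-] [<-]|_]; first exact: knuth_equiv_cat.
case: ifP => [ht [<-] [<-]|_]; first exact/knuth_equiv_cat/Ef.
by case: (crystal_f i x) => //= x' [<-] [<-]; apply: knuth_equiv_cat.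
Qed.

Lemma crystal_f_knuth_equiv i u v a b : knuth_equiv u v ->
  crystal_f i u = Some a -> crystal_f i v = Some b -> knuth_equiv a b.
Proof.
move=> uv; elim: uv a b => {u v} [u v uv|u|u v _ IH|u w v uw IH1 _ IH2] a b fu fv.
- exact: crystal_f_knuth_step uv fu fv.
- by move: fv; rewrite fu => -[->]; apply: rst_refl.
- exact/rst_sym/(IH _ _ fv fu).
have hw : has id (unbr_scan i w 0).
  rewrite -(knuth_equiv_invariant (@has_unbr_knuth_step i) uw).
  by move: fu; rewrite /crystal_f; case: ifP.
have [c fw] : exists c, crystal_f i w = Some c by rewrite /crystal_f hw; eexists.
exact: rst_trans (IH1 _ _ fu fw) (IH2 _ _ fw fv).
Qed.

(** * Standardization *)

Definition std_at (w : seq nat) p :=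
  count (fun y => y < nth 0 w p) w + count (pred1 (nth 0 w p)) (take p w) + 1.

Lemma stdE w : std w = map (std_at w) (iota 0 (size w)).
Proof. by []. Qed.

Lemma nth_cat_size (x s : seq nat) k : nth 0 (x ++ s) (size x + k) = nth 0 s k.
Proof. by rewrite nth_cat ltnNge leq_addr addKn. Qed.

Lemma count_lt_eq_le (s : seq nat) a b : a < b ->
  count (fun y => y < a) s + count (pred1 a) s <= count (fun y => y < b) s.
Proof.
move=> ab; elim: s => //= y s IH.
case: (ltngtP y a) => [ya|ay|->] /=; last by rewrite ab; lia.
  by rewrite (ltn_trans ya ab); lia.
by case: (y < b); lia.
Qed.

Lemma count_take_lt (P : pred nat) w p q : p < q -> p < size w -> P (nth 0 w p) ->
  count P (take p w) < count P (take q w).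
Proof.
move=> pq pw Pp.
have pq' : p < size (take q w) by rewrite size_take; case: ifP => // _; lia.
rewrite -(cat_take_drop p (take q w)) take_takel ?(ltnW pq) // count_cat (drop_nth 0 pq').
by rewrite nth_take //= Pp; lia.
Qed.

Lemma std_at_lt w p q : p < size w ->
  (nth 0 w p < nth 0 w q) || (nth 0 w p == nth 0 w q) && (p < q) ->
  std_at w p < std_at w q.
Proof.
rewrite /std_at => pw /orP[lt|/andP[/eqP eq pq]]; last first.
  by rewrite -eq ltn_add2r ltn_add2l count_take_lt //= eqxx.
have lt_all : count (pred1 (nth 0 w p)) (take p w) < count (pred1 (nth 0 w p)) w.
  by have := @count_take_lt (pred1 (nth 0 w p)) w p (size w) pw pw; rewrite take_size /= eqxx; apply.
rewrite ltn_add2r (leq_trans _ (leq_addr _ _)) // (leq_trans _ (count_lt_eq_le w lt)) //.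
by rewrite -addnS leq_add2l; exact: lt_all.
Qed.

Lemma std_swap x y a b (u := x ++ a :: b :: y)
    (sx := map (std_at u) (iota 0 (size x)))
    (sy := map (std_at u) (iota (size x).+2 (size y))) : a != b ->
  std u = sx ++ std_at u (size x) :: std_at u (size x).+1 :: sy /\
  std (x ++ b :: a :: y) = sx ++ std_at u (size x).+1 :: std_at u (size x) :: sy.
Proof.
move=> ab; set v := x ++ b :: a :: y.
have swap_perm s : perm_eq (a :: b :: s) (b :: a :: s) by apply/permP => P /=; rewrite addnCA.
have Ecount P : count P v = count P u by apply/permP; rewrite perm_cat2l perm_sym.
have Eiota : iota 0 (size u) = iota 0 (size x) ++ size x :: (size x).+1 :: iota (size x).+2 (size y).
  by rewrite size_cat iotaD.
have Eout p : p \in iota 0 (size x) ++ iota (size x).+2 (size y) -> std_at v p = std_at u p.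
  rewrite mem_cat !mem_iota add0n => hp.
  have Enth : nth 0 v p = nth 0 u p.
    by rewrite !nth_cat; case: ltnP => // xp; case E: (p - size x) => [|[|k]] //; lia.
  have Etake : perm_eq (take p v) (take p u).
    rewrite !take_cat; case: ltnP => [_|xp]; first exact: perm_refl.
    by rewrite perm_cat2l; case E: (p - size x) => [|[|k]] /=; [lia|lia|rewrite perm_sym].
  by rewrite /std_at Enth (permP Etake) Ecount.
have Ewin k : k < 2 -> std_at v (size x + k) = std_at u (size x + (1 - k)).
  case: k => [|[|//]] _; rewrite /std_at !nth_cat_size Ecount !take_cat !ltnNge !leq_addr /= !addKn /=.
    by rewrite !count_cat /= (negbTE ab).
  by rewrite !count_cat /= eq_sym (negbTE ab).
split; first by rewrite stdE Eiota map_cat.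
have Esize : size v = size u by rewrite !size_cat.
have [Ew0 Ew1] := (Ewin 0 isT, Ewin 1 isT); rewrite /= addn0 addn1 in Ew0 Ew1.
rewrite stdE Esize Eiota !map_cat /= Ew0 Ew1.
by congr (_ ++ _ :: _ :: _); apply/eq_in_map => p hp; apply: Eout; rewrite mem_cat hp ?orbT.
Qed.

Lemma std_at_cat_lt x s y p q : p < size s -> q < size s ->
  (nth 0 s p < nth 0 s q) || (nth 0 s p == nth 0 s q) && (p < q) ->
  std_at (x ++ s ++ y) (size x + p) < std_at (x ++ s ++ y) (size x + q).
Proof.
move=> ps qs h; apply: std_at_lt; first by rewrite !size_cat; lia.
by rewrite !nth_cat_size !nth_cat ps qs ltn_add2l.
Qed.

Lemma std_knuth_step u v : knuth_step u v -> knuth_step (std u) (std v).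
Proof.
case=> x [y [a [b [c [[/andP[ab bc] [-> ->]]|[/andP[ab bc] [-> ->]]]]]]].
- have AB := @std_at_cat_lt x [:: a; c; b] y 0 2 isT isT.
  have BC := @std_at_cat_lt x [:: a; c; b] y 2 1 isT isT.
  rewrite /= andbT orbC -leq_eqVlt addn0 addn2 in AB; rewrite /= addn1 addn2 in BC.
  have ac : a != c by rewrite neq_ltn (leq_ltn_trans ab bc).
  have [/= -> ->] := std_swap x (b :: y) ac.
  do 5 eexists; left; split; last by split.
  by rewrite (ltnW (AB ab)) BC // bc.
- have AB := @std_at_cat_lt x [:: b; a; c] y 1 0 isT isT.
  have BC := @std_at_cat_lt x [:: b; a; c] y 0 2 isT isT.
  rewrite /= addn0 addn1 in AB; rewrite /= andbT orbC -leq_eqVlt addn0 addn2 in BC.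
  have ac : a != c by rewrite neq_ltn (leq_trans ab bc).
  have [] := std_swap (rcons x b) y ac; rewrite -!cats1 -!catA /= => -> ->.
  rewrite size_cat addn1 -addn1 iotaD map_cat addn1 add0n -!catA /=.
  do 5 eexists; right; split; last by split.
  by rewrite AB ?ab // ltnW ?BC.
Qed.

Lemma std_knuth_equiv u v : knuth_equiv u v -> knuth_equiv (std u) (std v).
Proof.
by move=> uv; apply: (@knuth_equiv_map predT) uv isT => // u' v' /std_knuth_step.
Qed.

(** * Dyck pattern intervals *)

Definition low_half i m x := i <= x <= i + m.
Definition high_half i m x := i + m < x <= i + 2 * m.
Definition increasing_on (P : pred nat) (w : seq nat) := sorted ltn (filter P w).

Definition dyck_word i m w :=
  [&& increasing_on (low_half i m) w, increasing_on (high_half i m) w &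
      open_after i (map (collapse i m) w) 0 == 0].

Definition convex (P : pred nat) := forall a b c, a <= b <= c -> P a -> P c -> P b.

Lemma convex_low_half i m : convex (low_half i m).
Proof. by move=> a b c; rewrite /low_half; lia. Qed.

Lemma convex_high_half i m : convex (high_half i m).
Proof. by move=> a b c; rewrite /high_half; lia. Qed.

Lemma increasing_on_window P x t y p q : increasing_on P (x ++ t ++ y) ->
  subseq [:: p; q] t -> P p -> P q -> p < q.
Proof.
move=> inc pqt Pp Pq.
have pqw : subseq [:: p; q] (x ++ t ++ y).
  exact: subseq_trans pqt (subseq_trans (prefix_subseq t y) (suffix_subseq x _)).
have : subseq [:: p; q] (filter P (x ++ t ++ y)) by rewrite subseq_filter /= Pp Pq.
by move/(subseq_sorted ltn_trans)/(_ inc); rewrite /= andbT.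
Qed.

Lemma filter_knuth_step P u v : convex P -> knuth_step u v ->
  increasing_on P u || increasing_on P v -> filter P u = filter P v.
Proof.
move=> cP [x [y [a [b [c [[/andP[ab bc] [-> ->]]|[/andP[ab bc] [-> ->]]]]]]]] inc;
  rewrite !filter_cat; congr (_ ++ _ ++ _) => /=.
- case Pa: (P a); case Pc: (P c) => //=.
  have Pb : P b by apply: (cP a b c) => //; rewrite ab ltnW.
  exfalso; case/orP: inc => inc.
    by have := increasing_on_window inc (subseq_cons [:: c; b] a) Pc Pb; lia.
  by have := increasing_on_window inc (prefix_subseq [:: c; a] [:: b]) Pc Pa; lia.
- case Pa: (P a); case Pc: (P c) => //=.
  have Pb : P b by apply: (cP a b c) => //; rewrite ltnW.
  rewrite Pb; exfalso; case/orP: inc => inc.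
    by have := increasing_on_window inc (prefix_subseq [:: b; a] [:: c]) Pb Pa; lia.
  by have := increasing_on_window inc (subseq_cons [:: c; a] b) Pc Pa; lia.
Qed.

Lemma increasing_on_knuth_step P u v : convex P -> knuth_step u v ->
  increasing_on P u = increasing_on P v.
Proof.
move=> cP uv; have [inc|] := boolP (increasing_on P u || increasing_on P v).
  by rewrite /increasing_on (filter_knuth_step cP uv inc).
by case/norP=> /negbTE-> /negbTE->.
Qed.

Lemma collapse_mono i m : {homo collapse i m : x y / x <= y}.
Proof. by move=> x y; rewrite /collapse; repeat case: ifP => ?; lia. Qed.

Lemma collapse_inj_halves i m b c : b < c -> collapse i m b = collapse i m c ->
  (low_half i m b && low_half i m c) || (high_half i m b && high_half i m c).
Proof. by rewrite /collapse /low_half /high_half; repeat case: ifP => ?; lia. Qed.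

(* Two letters of a Knuth move that collapse to the same letter would form a descent
   inside one half. *)
Lemma collapse_knuth_step i m u v : knuth_step u v ->
  increasing_on (low_half i m) u -> increasing_on (high_half i m) u ->
  knuth_step (map (collapse i m) u) (map (collapse i m) v).
Proof.
move=> [x [y [a [b [c [[/andP[ab bc] [-> ->]]|[/andP[ab bc] [-> ->]]]]]]]] incL incH;
  rewrite !map_cat /=; exists (map (collapse i m) x), (map (collapse i m) y);
  exists (collapse i m a), (collapse i m b), (collapse i m c); [left|right]; split => //.
- rewrite collapse_mono //= ltn_neqAle collapse_mono ?(ltnW bc) // andbT.
  apply/eqP => /(collapse_inj_halves bc) /orP[] /andP[Pb Pc].
    by have := increasing_on_window incL (subseq_cons [:: c; b] a) Pc Pb; lia.
  by have := increasing_on_window incH (subseq_cons [:: c; b] a) Pc Pb; lia.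
- rewrite collapse_mono // andbT ltn_neqAle collapse_mono ?(ltnW ab) // andbT.
  apply/eqP => /(collapse_inj_halves ab) /orP[] /andP[Pa Pb].
    by have := increasing_on_window incL (prefix_subseq [:: b; a] [:: c]) Pb Pa; lia.
  by have := increasing_on_window incH (prefix_subseq [:: b; a] [:: c]) Pb Pa; lia.
Qed.

Lemma collapse_knuth_equiv i m u v : knuth_equiv u v ->
  increasing_on (low_half i m) u && increasing_on (high_half i m) u ->
  knuth_equiv (map (collapse i m) u) (map (collapse i m) v).
Proof.
apply: (knuth_equiv_map (P := [pred w | increasing_on (low_half i m) w &&
                                          increasing_on (high_half i m) w]))
  => [u' v' uv|u' v' uv /andP[]]; last exact: collapse_knuth_step.
by rewrite /= (increasing_on_knuth_step (@convex_low_half i m) uv)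
  (increasing_on_knuth_step (@convex_high_half i m) uv).
Qed.

Lemma dyck_word_knuth_equiv i m u v : knuth_equiv u v -> dyck_word i m u = dyck_word i m v.
Proof.
apply: knuth_equiv_invariant => {}u {}v uv.
rewrite /dyck_word -(increasing_on_knuth_step (@convex_low_half i m) uv).
rewrite -(increasing_on_knuth_step (@convex_high_half i m) uv).
case: (boolP (increasing_on (low_half i m) u && increasing_on (high_half i m) u)).
  case/andP=> incL incH; rewrite incL incH.
  by rewrite (open_after_knuth_step _ _ (collapse_knuth_step uv incL incH)).
by case/nandP=> /negbTE->; rewrite ?andbF.
Qed.

Lemma sorted_ltn_rcons (s : seq nat) x :
  sorted ltn (rcons s x) = sorted ltn s && all (ltn^~ x) s.
Proof. by rewrite -cats1 !(sorted_pairwise ltn_trans) pairwise_cat allrel1r /= andbT andbC. Qed.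

Lemma collapse_halves i m x :
  in_interval i m x -> collapse i m x = if low_half i m x then i else i.+1.
Proof. by rewrite /collapse /low_half /in_interval; repeat case: ifP => ?; lia. Qed.

(* Row 0 holds the low letters followed by the high letters [us] that are still
   unbracketed; row 1 holds the bracketed high letters [ms]. *)
Lemma RSK_P_halves i m w : all (in_interval i m) w ->
    increasing_on (low_half i m) w -> increasing_on (high_half i m) w ->
  exists us ms, [/\ RSK_P w = two_rows (filter (low_half i m) w ++ us) ms,
    filter (high_half i m) w = ms ++ us,
    size us = open_after i (map (collapse i m) w) 0 &
    (ms != [::] -> filter (low_half i m) w != [::])].
Proof.
elim/last_ind: w => [|w x IH]; first by exists [::], [::].
rewrite all_rcons /increasing_on !filter_rcons => /andP[xI wI].
rewrite -[rcons w x]cats1 RSK_P_cat cats1 map_rcons /open_after foldl_rcons.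
rewrite -/(open_after i (map (collapse i m) w) 0) /= collapse_halves //.
case xL: (low_half i m x).
- have -> : high_half i m x = false by move: xL; rewrite /low_half /high_half; lia.
  rewrite /open_step eqxx neq_succn -/(open_step i) sorted_ltn_rcons => /andP[sL Lx] sH.
  have [us [ms [-> EH <- Em]]] := IH wI sL sH.
  have {}Lx : all (leq^~ x) (filter (low_half i m) w).
    by apply/allP=> y /(allP Lx) /ltnW.
  case: us EH => [|u us] EH.
    rewrite cats0 in EH; rewrite cats0 two_rows_insert_high //; exists [::], ms.
    by rewrite cats0 EH cats0; split=> // _; apply: rcons_nil_neq.
  have xu : x < u.
    have : u \in filter (high_half i m) w by rewrite EH mem_cat mem_head orbT.
    by rewrite mem_filter /high_half => /andP[+ _]; move: xL; rewrite /low_half; lia.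
  have msu : all (leq^~ u) ms.
    move: sH; rewrite EH (sorted_pairwise ltn_trans) pairwise_cat allrel_consr.
    by case/and3P=> /andP[/allP msu _] _ _; apply/allP=> y /msu /ltnW.
  rewrite two_rows_insert_low //; exists us, (rcons ms u).
  by rewrite !cat_rcons EH; split=> // _; apply: rcons_nil_neq.
- have -> : high_half i m x by move: xL xI; rewrite /low_half /high_half /in_interval; lia.
  rewrite /open_step eqxx -/(open_step i) => sL; rewrite sorted_ltn_rcons => /andP[sH Hx].
  have [us [ms [-> EH <- Em]]] := IH wI sL sH.
  rewrite two_rows_insert_high.
  - by exists (rcons us x), ms; rewrite EH !rcons_cat size_rcons.
  - apply/allP=> y; rewrite mem_cat => /orP[|yus].
      rewrite mem_filter /low_half => /andP[+ _]; move: xL xI; rewrite /low_half /in_interval; lia.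
    by apply/ltnW/(allP Hx); rewrite EH mem_cat yus orbT.
  - by move/Em; case: (filter (low_half i m) w).
Qed.

Lemma increasing_on_split (P : pred nat) w :
  (forall u j v k, w = u ++ j :: v -> k \in u -> P k -> P j -> k < j) ->
  increasing_on P w.
Proof.
rewrite /increasing_on (sorted_pairwise ltn_trans).
elim: w => //= x w IH ordered.
have {}IH : pairwise ltn (filter P w).
  apply: IH => u j v k Ew ku; apply: (ordered (x :: u) j v k); first by rewrite Ew.
  by rewrite inE ku orbT.
case Px: (P x) => //=; rewrite IH andbT; apply/allP => j; rewrite mem_filter => /andP[Pj jw].
have [u [v Ew]] : exists u v, w = u ++ j :: v by case/splitPr: jw => u v; exists u, v.
by apply: (ordered (x :: u) j v x); rewrite ?Ew ?mem_head.
Qed.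

Lemma dyck_word_restrict i m pi : 0 < m ->
  dyck_word i m (restrict pi i m) = dyck_word i m pi.
Proof.
move=> m0; have sub (P : pred nat) : (forall x, P x -> in_interval i m x) ->
    filter P (restrict pi i m) = filter P pi.
  by move=> PI; rewrite -filter_predI; apply: eq_filter => x /=; case Px: (P x); rewrite /= ?PI.
rewrite /dyck_word /increasing_on !sub; last 2 first.
- by move=> x; rewrite /high_half /in_interval; lia.
- by move=> x; rewrite /low_half /in_interval; lia.
congr [&& _, _ & _ == 0]; clear sub; elim: pi 0 => //= x pi IH o; rewrite /open_after /=.
case xI: (in_interval i m x) => /=; rewrite -!/(open_after _ _ _) IH //.
have -> : collapse i m x = x by move: xI; rewrite /collapse /in_interval; repeat case: ifP => ?; lia.
suff -> : open_step i o x = o by [].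
by move: xI; rewrite /open_step /in_interval; case: eqP => [->|_]; [lia|case: eqP => [->|_] //; lia].
Qed.

Lemma dyck_shape_dyck_word i m w : uniq w -> all (in_interval i m) w ->
  RSK_P w = [:: iota i m.+1; iota (i + m).+1 m] -> dyck_word i m w.
Proof.
move=> uw aw EP.
have inv u j v k : w = u ++ j :: v -> k \in u -> j < k ->
    j \in iota i m.+1 /\ exists2 z, z <= k & z \in iota (i + m).+1 m.
  by move=> Ew; rewrite Ew in EP; apply: two_row_inversion EP.
have neq u j v k : w = u ++ j :: v -> k \in u -> k != j.
  move=> Ew ku; apply/eqP => kj; move: uw; rewrite Ew cat_uniq.
  by case/and3P=> _ /hasPn/(_ j (mem_head _ _)); rewrite /= -kj ku.
have incL : increasing_on (low_half i m) w.
  apply: increasing_on_split => u j v k Ew ku Lk _.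
  case: (ltngtP k j) => // [jk|kj]; last by have := neq _ _ _ _ Ew ku; rewrite kj eqxx.
  have [_ [z zk]] := inv _ _ _ _ Ew ku jk.
  by rewrite mem_iota; move: Lk; rewrite /low_half; lia.
have incH : increasing_on (high_half i m) w.
  apply: increasing_on_split => u j v k Ew ku _ Hj.
  case: (ltngtP k j) => // [jk|kj]; last by have := neq _ _ _ _ Ew ku; rewrite kj eqxx.
  have [+ _] := inv _ _ _ _ Ew ku jk.
  by rewrite mem_iota; move: Hj; rewrite /high_half; lia.
rewrite /dyck_word incL incH /=.
have [[|u us] [ms [EP' EH <- _]]] := RSK_P_halves aw incL incH; first by [].
have : u \in filter (high_half i m) w by rewrite EH mem_cat mem_head orbT.
rewrite mem_filter /high_half => /andP[uH _].
move: EP'; rewrite EP two_rowsE ?cat_cons_nil_neq // => -[E _].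
have : u \in iota i m.+1 by move: E => /= ->; rewrite mem_cat mem_head orbT.
by rewrite mem_iota; move: uH; lia.
Qed.

Lemma dyck_word_dyck_shape i m w : 0 < m -> w =i in_interval i m ->
  dyck_word i m w -> RSK_P w = [:: iota i m.+1; iota (i + m).+1 m].
Proof.
move=> m0 memw /and3P[incL incH /eqP bal].
have aw : all (in_interval i m) w by apply/allP => x; rewrite memw.
have [us [ms [EP EH Eo _]]] := RSK_P_halves aw incL incH.
have us0 : us = [::] by apply/nilP; rewrite /nilp Eo bal.
have EL : filter (low_half i m) w = iota i m.+1.
  apply: (irr_sorted_eq ltn_trans ltnn) => //; first exact: iota_ltn_sorted.
  by move=> x; rewrite mem_filter memw mem_iota /low_half /in_interval unfold_in; apply/idP/idP; lia.
have EM : ms = iota (i + m).+1 m.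
  rewrite -[ms]cats0 -us0 -EH; apply: (irr_sorted_eq ltn_trans ltnn) => //; first exact: iota_ltn_sorted.
  by move=> x; rewrite mem_filter memw mem_iota /high_half /in_interval unfold_in; apply/idP/idP; lia.
by rewrite EP us0 cats0 EL EM /two_rows /= -size_eq0 size_iota -lt0n m0.
Qed.

Lemma dyck_intervalP N pi i m : is_perm N pi ->
  dyck_interval N pi i m <-> [/\ 0 < m, 1 <= i, i + 2 * m <= N & dyck_word i m pi].
Proof.
move=> pP; split=> [[m0 i1 iN EP]|[m0 i1 iN dw]]; split=> //.
  rewrite -dyck_word_restrict //; apply: dyck_shape_dyck_word EP.
    by rewrite filter_uniq // (perm_uniq pP) iota_uniq.
  by apply/allP=> x; rewrite mem_filter => /andP[].
apply: dyck_word_dyck_shape => [//|x|]; last by rewrite dyck_word_restrict.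
by rewrite mem_filter (perm_mem pP) mem_iota /in_interval unfold_in; apply/idP/idP; lia.
Qed.

Theorem proposition4p5 (N : nat) (pi sigma : seq nat) (i m : nat) :
  is_perm N pi -> is_perm N sigma -> knuth_equiv pi sigma ->
  dyck_interval N pi i m ->
  dyck_interval N sigma i m /\
  (forall pi' sigma' : seq nat,
      skeleton_edge N pi i m pi' -> skeleton_edge N sigma i m sigma' ->
      knuth_equiv pi' sigma').
Proof.
move=> pP pS e /(dyck_intervalP i m pP) [m0 i1 iN dw].
have dws : dyck_word i m sigma by rewrite -(dyck_word_knuth_equiv i m e).
split; first exact/(dyck_intervalP i m pS).
move=> _ _ [_ [a [fa ->]]] [_ [b [fb ->]]].
apply/std_knuth_equiv/(crystal_f_knuth_equiv _ fa fb)/collapse_knuth_equiv => //.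
by case/and3P: dw => -> ->.
Qed.
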